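(* Let $p_1,p_2\in(0,1)$ and $U_1^+,U_1^-,U_2^+,U_2^->0$. Consider the linear program (AUX) in the variables $c=(c_1^+,c_1^-,c_2^+,c_2^-)\in\mathbb{R}^4$: maximize $W'(c)=p_1U_1^+c_1^+-(1-p_1)U_1^-c_1^-+p_2U_2^+c_2^+-(1-p_2)U_2^-c_2^-$ subject to $p_1c_2^+-(1-p_1)c_2^-\le p_1^2$; $p_2c_1^+-(1-p_2)c_1^-\le p_2^2$; $p_1c_1^++(1-p_1)c_1^-=p_2c_2^++(1-p_2)c_2^-$; and $0\le c_1^+,c_1^-,c_2^+,c_2^-\le 1$. Then at least one of $c^{(1)}=(c_1^+=1,\ c_1^-=p_2,\ c_2^+=1,\ c_2^-=p_1)$ and $c^{(2)}=(c_1^+=p_2,\ c_1^-=0,\ c_2^+=p_1,\ c_2^-=0)$ is an optimal solution of (AUX). *)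

From Stdlib Require Import Reals.
Open Scope R_scope.

Record cvec : Type := mkC { c1p : R; c1m : R; c2p : R; c2m : R }.

Definition W' (p1 p2 U1p U1m U2p U2m : R) (c : cvec) : R :=
  p1 * U1p * c1p c - (1 - p1) * U1m * c1m c
  + p2 * U2p * c2p c - (1 - p2) * U2m * c2m c.

Definition in01 (x : R) : Prop := 0 <= x <= 1.

Definition feasible (p1 p2 : R) (c : cvec) : Prop :=
  p1 * c2p c - (1 - p1) * c2m c <= p1 ^ 2 /\
  p2 * c1p c - (1 - p2) * c1m c <= p2 ^ 2 /\
  p1 * c1p c + (1 - p1) * c1m c = p2 * c2p c + (1 - p2) * c2m c /\
  in01 (c1p c) /\ in01 (c1m c) /\ in01 (c2p c) /\ in01 (c2m c).

Definition optimal (p1 p2 U1p U1m U2p U2m : R) (c : cvec) : Prop :=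
  feasible p1 p2 c /\
  forall d : cvec, feasible p1 p2 d ->
    W' p1 p2 U1p U1m U2p U2m d <= W' p1 p2 U1p U1m U2p U2m c.

(* The objective splits as [g1 + g2] with [g1 = a c1+ - b c1-] and [g2 = c c2+ - d c2-],
   and the equality constraint forces both halves to share the value
   [s = p1 c1+ + (1 - p1) c1- = p2 c2+ + (1 - p2) c2-].  For fixed [s], each half is
   bounded by a concave piecewise linear function of [s] whose kinks sit at
   [s = p1 p2] (attained by c^(2)) and [s = p1 + p2 - p1 p2] (attained by c^(1)).
   Their sum is again concave piecewise linear with the same kinks, so it is
   maximized at one of them: every feasible value is at most [max (W' c^(1)) (W' c^(2))]. *)
From Stdlib Require Import Reals Lra Psatz.
Open Scope R_scope.

Lemma le_Rmax_of_chord (s0 S s u v w : R) :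
  s0 < S -> s0 <= s <= S ->
  (S - s0) * w <= (S - s) * u + (s - s0) * v -> w <= Rmax u v.
Proof.
  intros HsS [Hlo Hhi] Hw.
  pose proof (Rmax_l u v); pose proof (Rmax_r u v).
  apply (Rmult_le_reg_l (S - s0)); [lra|].
  assert ((S - s) * u <= (S - s) * Rmax u v) by (apply Rmult_le_compat_l; lra).
  assert ((s - s0) * v <= (s - s0) * Rmax u v) by (apply Rmult_le_compat_l; lra).
  nra.
Qed.

Section HalfObjective.

Variables p q a b x y s : R.
Hypotheses (Hp : 0 < p < 1) (Ha : 0 < a) (Hb : 0 < b).
Hypotheses (Hy : 0 <= y) (Hx : x <= 1) (Hcap : q * x - (1 - q) * y <= q ^ 2).
Hypothesis Hs : p * x + (1 - p) * y = s.

Lemma half_le_low : s <= p * q -> a * x - b * y <= a * q.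
Proof using Hp Ha Hb Hy Hs.
  intros Hlow.
  assert (Hslope : p * (a * x - b * y) <= a * s).
  { assert (0 <= (a * (1 - p) + p * b) * y) by (apply Rmult_le_pos; nra).
    nra. }
  apply (Rmult_le_reg_l p); [lra|]; nra.
Qed.

Lemma half_le_high : p + q - p * q <= s -> a * x - b * y <= a - b * q.
Proof using Hp Ha Hb Hx Hs.
  intros Hhigh.
  assert (Hslope : (1 - p) * (a * x - b * y)
                   <= (1 - p) * (a - b * q) - b * (s - (p + q - p * q))).
  { assert (0 <= (1 - x) * (a * (1 - p) + b * p)) by (apply Rmult_le_pos; nra).
    nra. }
  apply (Rmult_le_reg_l (1 - p)); [lra|]; nra.
Qed.

(* The chord joining the values [a q] at [s = p q] and [a - b q] at [s = p + q - p q]. *)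
Lemma half_le_chord :
  (p + q - p * q - p * q) * (a * x - b * y)
  <= (p + q - p * q - s) * (a * q) + (s - p * q) * (a - b * q).
Proof using Hp Ha Hb Hcap Hs.
  assert (0 <= (a * (1 - p) + b * p) * (q ^ 2 - (q * x - (1 - q) * y)))
    by (apply Rmult_le_pos; nra).
  nra.
Qed.

End HalfObjective.

Lemma feasible_c1 (p1 p2 : R) :
  0 < p1 < 1 -> 0 < p2 < 1 -> feasible p1 p2 (mkC 1 p2 1 p1).
Proof. intros; unfold feasible, in01; simpl; repeat split; nra. Qed.

Lemma feasible_c2 (p1 p2 : R) :
  0 < p1 < 1 -> 0 < p2 < 1 -> feasible p1 p2 (mkC p2 0 p1 0).
Proof. intros; unfold feasible, in01; simpl; repeat split; nra. Qed.

Lemma W'_le_Rmax (p1 p2 U1p U1m U2p U2m : R) (e : cvec) :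
  0 < p1 < 1 -> 0 < p2 < 1 -> 0 < U1p -> 0 < U1m -> 0 < U2p -> 0 < U2m ->
  feasible p1 p2 e ->
  W' p1 p2 U1p U1m U2p U2m e
  <= Rmax (W' p1 p2 U1p U1m U2p U2m (mkC p2 0 p1 0))
          (W' p1 p2 U1p U1m U2p U2m (mkC 1 p2 1 p1)).
Proof.
  intros hp1 hp2 hU1p hU1m hU2p hU2m.
  destruct e as [x y z w]; unfold feasible, in01, W'; cbn [c1p c1m c2p c2m].
  intros (Hcap2 & Hcap1 & Hcouple & (_ & Hx1) & (Hy0 & _) & (_ & Hz1) & (Hw0 & _)).
  set (a := p1 * U1p); set (b := (1 - p1) * U1m).
  set (c := p2 * U2p); set (d := (1 - p2) * U2m).
  assert (Ha : 0 < a) by (unfold a; nra).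
  assert (Hb : 0 < b) by (unfold b; nra).
  assert (Hc : 0 < c) by (unfold c; nra).
  assert (Hd : 0 < d) by (unfold d; nra).
  set (s := p1 * x + (1 - p1) * y).
  assert (Hs1 : p1 * x + (1 - p1) * y = s) by reflexivity.
  assert (Hs2 : p2 * z + (1 - p2) * w = s) by (unfold s; lra).
  assert (Hkinks : p1 * p2 < p1 + p2 - p1 * p2) by nra.
  destruct (Rle_lt_dec s (p1 * p2)) as [Hlow | Hmid];
    [| destruct (Rle_lt_dec (p1 + p2 - p1 * p2) s) as [Hhigh | Hmid']].
  - pose proof (half_le_low p1 p2 a b x y s hp1 Ha Hb Hy0 Hs1 Hlow).
    pose proof (half_le_low p2 p1 c d z w s hp2 Hc Hd Hw0 Hs2 ltac:(lra)).
    eapply Rle_trans; [| apply Rmax_l]; lra.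
  - pose proof (half_le_high p1 p2 a b x y s hp1 Ha Hb Hx1 Hs1 Hhigh).
    pose proof (half_le_high p2 p1 c d z w s hp2 Hc Hd Hz1 Hs2 ltac:(lra)).
    eapply Rle_trans; [| apply Rmax_r]; lra.
  - apply (le_Rmax_of_chord (p1 * p2) (p1 + p2 - p1 * p2) s); [lra | lra |].
    pose proof (half_le_chord p1 p2 a b x y s hp1 Ha Hb Hcap1 Hs1).
    pose proof (half_le_chord p2 p1 c d z w s hp2 Hc Hd Hcap2 Hs2).
    lra.
Qed.

Theorem lemma3 (p1 p2 U1p U1m U2p U2m : R)
  (hp1 : 0 < p1 < 1) (hp2 : 0 < p2 < 1)
  (hU1p : 0 < U1p) (hU1m : 0 < U1m) (hU2p : 0 < U2p) (hU2m : 0 < U2m) :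
  optimal p1 p2 U1p U1m U2p U2m (mkC 1 p2 1 p1) \/
  optimal p1 p2 U1p U1m U2p U2m (mkC p2 0 p1 0).
Proof.
  set (W := W' p1 p2 U1p U1m U2p U2m).
  assert (Hbound : forall e, feasible p1 p2 e ->
      W e <= Rmax (W (mkC p2 0 p1 0)) (W (mkC 1 p2 1 p1)))
    by (intros e; now apply W'_le_Rmax).
  destruct (Rle_lt_dec (W (mkC p2 0 p1 0)) (W (mkC 1 p2 1 p1))) as [Hle | Hgt].
  - left; split; [now apply feasible_c1|].
    intros e He; eapply Rle_trans; [now apply Hbound |]; now rewrite Rmax_right.
  - right; split; [now apply feasible_c2|].
    intros e He; eapply Rle_trans; [now apply Hbound |].
    rewrite Rmax_left; [apply Rle_refl | lra].
Qed.
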